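(* Let $G$ be a mixed abelian group in which every subgroup is an essential subgroup of some direct summand of $G$. Then the torsion subgroup of $G$ is divisible.
   Context: All groups are additively written abelian groups; a mixed group contains both non-zero elements of finite order and elements of infinite order. A subgroup $H$ of a group $A$ is essential in $A$ if $H \cap S \neq \{0\}$ for every non-zero subgroup $S$ of $A$. *)

(* abelian groups are zmodType's; subgroups are predicates. *)
From mathcomp Require Import all_boot all_algebra.
Set Implicit Arguments. Unset Strict Implicit. Unset Printing Implicit Defensive.
Import GRing.Theory.
Local Open Scope ring_scope.

Definition is_subgroup (G : zmodType) (H : G -> Prop) : Prop :=
  H 0 /\ (forall x y, H x -> H y -> H (x - y)).

Definition subgroup_le (G : zmodType) (H K : G -> Prop) : Prop :=
  forall x, H x -> K x.

Definition direct_summand (G : zmodType) (D : G -> Prop) : Prop :=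
  is_subgroup D /\
  exists K : G -> Prop, is_subgroup K /\
    (forall x, D x -> K x -> x = 0) /\
    (forall g, exists d k, D d /\ K k /\ g = d + k).

Definition essential_in (G : zmodType) (H D : G -> Prop) : Prop :=
  is_subgroup H /\ subgroup_le H D /\
  forall S : G -> Prop, is_subgroup S -> subgroup_le S D ->
    (exists x, S x /\ x <> 0) -> exists x, H x /\ S x /\ x <> 0.

Definition finite_order (G : zmodType) (x : G) : Prop :=
  exists n : nat, (0 < n)%N /\ x *+ n = 0.

Arguments finite_order : clear implicits.
Definition torsion_part (G : zmodType) : G -> Prop := fun x => finite_order G x.

Definition mixed (G : zmodType) : Prop :=
  (exists x : G, x <> 0 /\ finite_order G x) /\ (exists x : G, ~ finite_order G x).

Definition divisible_subgroup (G : zmodType) (A : G -> Prop) : Prop :=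
  forall (x : G) (n : nat), A x -> (0 < n)%N -> exists y, A y /\ y *+ n = x.
Arguments torsion_part : clear implicits.

From mathcomp Require Import all_boot all_algebra.
Import GRing.Theory.
Local Open Scope ring_scope.
Set Implicit Arguments. Unset Strict Implicit.

(* Pick a of infinite order and put b := n a + x for the torsion element x to
   be divided by n.  The cyclic group <b> is torsion-free, so the summand D in
   which it is essential is torsion-free too; hence x lies in a complement K
   of D.  Writing a = d + k with d in D and k in K, the element n k + x lies in
   K and equals b - n d, which lies in D; so n (-k) = x, and -k is torsion. *)

Section Subgroups.
Variables (G : zmodType) (H : G -> Prop).
Hypothesis subH : is_subgroup H.

Lemma subgroup0 : H 0.
Proof. by case: subH. Qed.

Lemma subgroupB x y : H x -> H y -> H (x - y).
Proof. exact: (proj2 subH). Qed.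

Lemma subgroupN x : H x -> H (- x).
Proof. by move=> Hx; rewrite -sub0r; apply: subgroupB => //; apply: subgroup0. Qed.

Lemma subgroupD x y : H x -> H y -> H (x + y).
Proof. by move=> Hx Hy; rewrite -[y]opprK; apply/subgroupB/subgroupN. Qed.

Lemma subgroupMn x n : H x -> H (x *+ n).
Proof.
move=> Hx; elim: n => [|n IHn]; first by rewrite mulr0n; apply: subgroup0.
by rewrite mulrS; apply: subgroupD.
Qed.

End Subgroups.

Section Torsion.
Variable G : zmodType.

Definition torsion_free (H : G -> Prop) : Prop :=
  forall x, H x -> finite_order G x -> x = 0.

Definition multiples (b : G) : G -> Prop := fun z => exists j : int, z = b *~ j.

Lemma subgroup_multiples b : is_subgroup (multiples b).
Proof.
split; first by exists 0; rewrite mulr0z.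
by move=> _ _ [i ->] [j ->]; exists (i - j); rewrite mulrzBr.
Qed.

Lemma finite_orderN x : finite_order G (- x) <-> finite_order G x.
Proof.
suff finN y : finite_order G y -> finite_order G (- y).
  by split=> [/finN|/finN //]; rewrite opprK.
by case=> m [m_gt0 ym0]; exists m; rewrite mulNrn ym0 oppr0.
Qed.

Lemma finite_orderD x y :
  finite_order G x -> finite_order G y -> finite_order G (x + y).
Proof.
move=> [m [m_gt0 xm0]] [n [n_gt0 yn0]]; exists (m * n)%N.
by rewrite muln_gt0 m_gt0 n_gt0 mulrnDl mulrnA xm0 mulnC mulrnA yn0 !mul0rn addr0.
Qed.

Lemma finite_orderMn x n :
  (0 < n)%N -> finite_order G (x *+ n) -> finite_order G x.
Proof.
move=> n_gt0 [m [m_gt0 xnm0]]; exists (n * m)%N.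
by rewrite muln_gt0 n_gt0 m_gt0 mulrnA.
Qed.

Lemma finite_orderMz x (j : int) :
  j != 0 -> finite_order G (x *~ j) -> finite_order G x.
Proof.
case: j => [q|q] /= j_neq0.
  by rewrite -pmulrn; apply: finite_orderMn; rewrite lt0n.
by rewrite NegzE mulrNz -pmulrn => /finite_orderN; apply: finite_orderMn.
Qed.

Lemma multiples_torsion_free b : ~ finite_order G b -> torsion_free (multiples b).
Proof.
move=> b_inf _ [j ->] /finite_orderMz fin_bj.
have [-> | j_neq0] := eqVneq j 0; first by rewrite mulr0z.
by case: b_inf; apply: fin_bj.
Qed.

Lemma essential_torsion_free H D :
  is_subgroup D -> essential_in H D -> torsion_free H -> torsion_free D.
Proof.
move=> subD [_ [_ essHD]] tfH d Dd [m [m_gt0 dm0]].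
have [// | /eqP d_neq0] := eqVneq d 0; exfalso.
pose S z := D z /\ z *+ m = 0.
have subS : is_subgroup S.
  split; first by split; [apply: subgroup0 | rewrite mul0rn].
  move=> u v [Du um0] [Dv vm0].
  by split; [apply: subgroupB | rewrite mulrnBl um0 vm0 subr0].
have [z [Hz [[_ zm0] z_neq0]]] : exists z, H z /\ S z /\ z <> 0.
  by apply: essHD => //; [move=> z []| exists d].
by apply/z_neq0/tfH => //; exists m.
Qed.

Lemma not_finite_orderMnD (a x : G) n :
  ~ finite_order G a -> (0 < n)%N -> finite_order G x ->
  ~ finite_order G (a *+ n + x).
Proof.
move=> a_inf n_gt0 x_fin b_fin; apply/a_inf/(finite_orderMn n_gt0).
by rewrite -(addrK x (a *+ n)); apply: finite_orderD => //; apply/finite_orderN.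
Qed.

Lemma torsion_component_eq0 (D K : G -> Prop) d k :
  is_subgroup D -> is_subgroup K -> (forall x, D x -> K x -> x = 0) ->
  torsion_free D -> D d -> K k -> finite_order G (d + k) -> d = 0.
Proof.
move=> subD subK DK0 tfD Dd Kk [m [m_gt0 dkm0]].
apply: tfD => //; exists m; split=> //.
apply: DK0; first exact: subgroupMn.
move/eqP: dkm0; rewrite mulrnDl addr_eq0 => /eqP ->.
by apply: (subgroupN subK); apply: subgroupMn.
Qed.

End Torsion.

Theorem lemma2p15 (G : zmodType) :
  mixed G ->
  (forall H : G -> Prop, is_subgroup H ->
     exists D : G -> Prop, direct_summand D /\ essential_in H D) ->
  divisible_subgroup (torsion_part G).
Proof.
move=> [_ [a a_inf]] summands x n [m [m_gt0 xm0]] n_gt0.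
have x_fin : finite_order G x by exists m.
pose b := a *+ n + x.
have [D [[subD [K [subK [DK0 DKG]]]] essbD]] := summands _ (subgroup_multiples b).
have tfD : torsion_free D.
  apply: essential_torsion_free subD essbD _.
  exact/multiples_torsion_free/not_finite_orderMnD.
have Db : D b by case: essbD => _ [bD _]; apply: bD; exists 1; rewrite mulr1z.
have Kx : K x.
  have [d [k [Dd [Kk xE]]]] := DKG x.
  have d0 : d = 0 by apply: (torsion_component_eq0 subD subK DK0 tfD Dd Kk); rewrite -xE.
  by rewrite xE d0 add0r.
have [d [k [Dd [Kk aE]]]] := DKG a.
have knxE : k *+ n + x = b - d *+ n.
  by rewrite /b aE mulrnDl [d *+ n + _]addrC addrAC addrK.
have knx0 : k *+ n + x = 0.
  apply: DK0; last by apply: subgroupD => //; apply: subgroupMn.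
  by rewrite knxE; apply: subgroupB => //; apply: subgroupMn.
have kx : (- k) *+ n = x by apply/eqP; rewrite mulNrn eq_sym -addr_eq0 addrC knx0.
by exists (- k); split=> //; apply: (finite_orderMn n_gt0); rewrite kx.
Qed.
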